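(* The Burgers transform does not preserve pointwise products: the identity $\mathcal{B}[f\cdot g](x,y) = \mathcal{B}[f](x,y) \cdot \mathcal{B}[g](x,y)$ fails in general at points with $x \neq 0$ (for holomorphic seeds $f,g$ with values in $\mathbb{C}_+$ whose product also takes values in $\mathbb{C}_+$).
   Context: $\mathbb{C}_+$ is the upper half-plane. For $U\subseteq\mathbb{C}$ open and connected with $U\cap\mathbb{R}$ containing an interval and $f\colon U\to\mathbb{C}_+$ holomorphic, the Burgers transform $\mathcal{B}[f]\colon\Omega_f\to\mathbb{C}_+$ is defined implicitly by $\mathcal{B}[f](x,y) = f(y - \mathcal{B}[f](x,y)\, x)$, where $\Omega_f \subseteq \mathbb{R}^2$ is the maximal open set on which this equation admits a unique $C^1$ solution with positive imaginary part. *)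

From Stdlib Require Import Reals.
From Coquelicot Require Import Coquelicot.
Open Scope R_scope.

Definition in_Cplus (z : C) : Prop := 0 < Im z.

Definition connected_C (U : C -> Prop) : Prop :=
  forall A B : C -> Prop, open A -> open B ->
    (forall z, U z -> A z \/ B z) ->
    (forall z, U z -> A z -> B z -> False) ->
    (exists z, U z /\ A z) -> (exists z, U z /\ B z) -> False.

Definition admissible_domain (U : C -> Prop) : Prop :=
  open U /\ connected_C U /\
  exists a b : R, a < b /\ forall t : R, a < t < b -> U (RtoC t).

Definition holo_Cplus (U : C -> Prop) (f : C -> C) : Prop :=
  forall z, U z -> ex_derive (K:=C_AbsRing) (V:=C_NormedModule) f z /\ in_Cplus (f z).

Definition C1_on (Om : R * R -> Prop) (B : R * R -> C) : Prop :=
  exists Dx Dy : R * R -> C,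
    (forall p, Om p ->
       is_derive (K:=R_AbsRing) (V:=C_R_NormedModule) (fun t => B (t, snd p)) (fst p) (Dx p) /\
       is_derive (K:=R_AbsRing) (V:=C_R_NormedModule) (fun t => B (fst p, t)) (snd p) (Dy p)) /\
    (forall p, Om p ->
       @continuous (prod_UniformSpace R_UniformSpace R_UniformSpace) C_UniformSpace Dx p /\
       @continuous (prod_UniformSpace R_UniformSpace R_UniformSpace) C_UniformSpace Dy p).

Definition burgers_sol (U : C -> Prop) (f : C -> C) (Om : R * R -> Prop)
    (B : R * R -> C) : Prop :=
  C1_on Om B /\
  forall p, Om p ->
    in_Cplus (B p) /\
    U (Cminus (RtoC (snd p)) (Cmult (B p) (RtoC (fst p)))) /\
    B p = f (Cminus (RtoC (snd p)) (Cmult (B p) (RtoC (fst p)))).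

(* Om is an open set on which the equation has a unique C^1 solution B.
   Any such Om lies in the maximal domain Omega_f and B = Burgers[f] on Om. *)
Definition burgers_unique_on (U : C -> Prop) (f : C -> C) (Om : R * R -> Prop)
    (B : R * R -> C) : Prop :=
  @open (prod_UniformSpace R_UniformSpace R_UniformSpace) Om /\
  burgers_sol U f Om B /\
  forall B', burgers_sol U f Om B' -> forall p, Om p -> B' p = B p.

(* For an affine seed f z = a z + b the defining equation B = a (y - B x) + b is linear
   in B, so B[f](x, y) = (a y + b) / (1 + a x), uniquely wherever 1 + a x <> 0.  Scaling
   the seed by a constant c gives B[c f](x, y) = c (a y + b) / (1 + c a x), whereas
   B[f] B[c] = c (a y + b) / (1 + a x); the two differ as soon as c <> 0, 1 and a x <> 0.
   The counterexample takes f z = z + i and g = 1 + i on a small box around the origin;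
   the domain where f and f g are C_+-valued is an intersection of two half-planes,
   hence convex and so connected. *)

From Stdlib Require Import Reals Psatz ClassicalEpsilon FunctionalExtensionality.
From Coquelicot Require Import Coquelicot.
Open Scope R_scope.

Ltac C_to_R :=
  unfold Cdiv, Cinv, Cminus, Copp, Cplus, Cmult, RtoC, Re, Im, Ci in *; cbn [fst snd] in *.

Lemma is_derive_C_R_pair (u v : R -> R) (t du dv : R) :
  is_derive u t du -> is_derive v t dv ->
  is_derive (K:=R_AbsRing) (V:=C_R_NormedModule) (fun s => (u s, v s)) t (du, dv).
Proof.
  intros Hu Hv.
  apply (filterdiff_comp_2 (K:=R_AbsRing) (T:=R_NormedModule) (U:=R_NormedModule)
    (V:=R_NormedModule) (W:=C_R_NormedModule) u v (fun a b => (a, b)) _ _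
    (fun a b => (a, b)) Hu Hv).
  apply filterdiff_ext_lin with (l1 := fun q => q).
  - apply filterdiff_ext with (f := fun q => q); [intros [a b]; reflexivity|].
    apply filterdiff_id.
  - intros [a b]; reflexivity.
Qed.

Lemma continuous_2d_pair (u v : R -> R -> R) (x y : R) :
  continuity_2d_pt u x y -> continuity_2d_pt v x y ->
  @continuous (prod_UniformSpace R_UniformSpace R_UniformSpace) C_UniformSpace
    (fun p => (u (fst p) (snd p), v (fst p) (snd p))) (x, y).
Proof.
  intros Hu%continuity_2d_pt_filterlim Hv%continuity_2d_pt_filterlim.
  eapply filterlim_filter_le_2; [|exact (filterlim_pair _ _ Hu Hv)].
  intros P [e HP].
  exists (ball (u x y) e) (ball (v x y) e); try apply locally_ball.
  intros a b Ha Hb. apply HP. split; assumption.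
Qed.

Lemma open_lt_continuous_2d (F : R -> R -> R) (c : R) :
  (forall x y, continuity_2d_pt F x y) ->
  @open (prod_UniformSpace R_UniformSpace R_UniformSpace) (fun p => c < F (fst p) (snd p)).
Proof.
  intros HF.
  apply (open_comp (fun p : R * R => F (fst p) (snd p)) (fun u => c < u)).
  - intros [x y] _. exact (proj1 (continuity_2d_pt_filterlim F x y) (HF x y)).
  - apply open_gt.
Qed.

Definition C1_real_on (Om : R * R -> Prop) (u : R -> R -> R) : Prop :=
  exists ux uy : R -> R -> R, forall x y, Om (x, y) ->
    is_derive (fun t => u t y) x (ux x y) /\ is_derive (fun t => u x t) y (uy x y) /\
    continuity_2d_pt ux x y /\ continuity_2d_pt uy x y.

Lemma C1_on_pair (Om : R * R -> Prop) (u v : R -> R -> R) :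
  C1_real_on Om u -> C1_real_on Om v ->
  C1_on Om (fun p => (u (fst p) (snd p), v (fst p) (snd p))).
Proof.
  intros [ux [uy Hu]] [vx [vy Hv]].
  exists (fun p => (ux (fst p) (snd p), vx (fst p) (snd p))).
  exists (fun p => (uy (fst p) (snd p), vy (fst p) (snd p))).
  split; intros [x y] Hp;
    destruct (Hu x y Hp) as (Hux & Huy & Cux & Cuy);
    destruct (Hv x y Hp) as (Hvx & Hvy & Cvx & Cvy).
  - split; apply is_derive_C_R_pair; assumption.
  - split; apply continuous_2d_pair; assumption.
Qed.

Lemma C1_real_on_bilinear_div_quadratic (Om : R * R -> Prop) (c0 c1 c2 c3 q0 q1 q2 : R) :
  (forall x y, Om (x, y) -> q0 + q1 * x + q2 * x * x <> 0) ->
  C1_real_on Om (fun x y => (c0 + c1 * x + c2 * y + c3 * x * y) / (q0 + q1 * x + q2 * x * x)).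
Proof.
  intros HQ.
  exists (fun x y => ((c1 + c3 * y) * (q0 + q1 * x + q2 * x * x)
                      - (c0 + c1 * x + c2 * y + c3 * x * y) * (q1 + 2 * q2 * x))
                     / ((q0 + q1 * x + q2 * x * x) * (q0 + q1 * x + q2 * x * x))).
  exists (fun x y => (c2 + c3 * x) / (q0 + q1 * x + q2 * x * x)).
  intros x y Hp. specialize (HQ x y Hp).
  split; [|split]; [auto_derive; auto; field; exact HQ ..|].
  split; unfold Rdiv, Rminus; repeat first
    [ apply continuity_2d_pt_mult | apply continuity_2d_pt_plus | apply continuity_2d_pt_opp
    | apply continuity_2d_pt_inv | apply continuity_2d_pt_const | apply continuity_2d_pt_id1
    | apply continuity_2d_pt_id2 ]; auto using Rmult_integral_contrapositive_currified.
Qed.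

Definition convex_C (U : C -> Prop) : Prop :=
  forall (z w : C) (t : R), U z -> U w -> 0 <= t <= 1 -> U (z + t * (w - z))%C.

Lemma unit_interval_locally_constant (P : R -> Prop) :
  (forall t, 0 <= t <= 1 -> locally t (fun u => P u <-> P t)) -> P 0 -> P 1.
Proof.
  intros Hloc P0. destruct (excluded_middle_informative (P 1)) as [|NP1]; [assumption|exfalso].
  set (chi := fun t => if excluded_middle_informative (P t) then -1 else 1).
  assert (Hchi : forall t, 0 <= t <= 1 -> continuity_pt chi t).
  { intros t Ht. apply continuity_pt_filterlim.
    apply (filterlim_ext_loc (fun _ => chi t)); [|apply filterlim_const].
    apply filter_imp with (2 := Hloc t Ht). intros u Hu. unfold chi.
    destruct (excluded_middle_informative (P t)), (excluded_middle_informative (P u)); tauto. }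
  destruct (Ranalysis5.IVT_interv chi 0 1 Hchi Rlt_0_1) as [t [_ Ht]]; unfold chi.
  - destruct (excluded_middle_informative (P 0)); [lra|contradiction].
  - destruct (excluded_middle_informative (P 1)); [contradiction|lra].
  - revert Ht; unfold chi. destruct (excluded_middle_informative (P t)); lra.
Qed.

Lemma continuous_segment (z w : C) (t : R) :
  continuous (fun u : R => (z + u * (w - z))%C) t.
Proof.
  apply (ex_derive_continuous (V:=C_R_NormedModule)).
  exists (fst w - fst z, snd w - snd z).
  eapply is_derive_ext;
    [|apply (is_derive_C_R_pair (fun u => fst z + u * (fst w - fst z))
                                (fun u => snd z + u * (snd w - snd z)))];
    [|auto_derive; [exact I|ring] ..].
  intros u. destruct z, w. C_to_R. f_equal; ring.
Qed.

Lemma connected_C_convex (U : C -> Prop) : open U -> convex_C U -> connected_C U.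
Proof.
  intros HU Hconv A B HA HB cover disj [z [Uz Az]] [w [Uw Bw]].
  set (p := fun u : R => (z + u * (w - z))%C).
  assert (Hp : forall S, open S -> forall t, S (p t) -> locally t (fun u => S (p u)))
    by (intros S HS t St; exact (continuous_segment z w t S (HS _ St))).
  apply (disj w Uw); [|exact Bw].
  replace w with (p 1) by (unfold p; ring).
  apply (unit_interval_locally_constant (fun u => A (p u))).
  - intros t Ht. assert (Ut : U (p t)) by exact (Hconv z w t Uz Uw Ht).
    destruct (cover _ Ut) as [At|Bt].
    + apply filter_imp with (2 := Hp A HA t At). tauto.
    + apply filter_imp with (2 := filter_and _ _ (Hp B HB t Bt) (Hp U HU t Ut)).
      intros u [Bu Uu]. split; intros Au; exfalso; eauto.
  - replace (p 0) with z by (unfold p; ring). exact Az.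
Qed.

Definition affine (a b : C) (z : C) : C := (a * z + b)%C.

Definition affine_burgers (a b : C) (p : R * R) : C := ((a * snd p + b) / (1 + a * fst p))%C.

Lemma ex_derive_affine (a b z : C) :
  ex_derive (K:=C_AbsRing) (V:=C_NormedModule) (affine a b) z.
Proof.
  eexists. apply (is_derive_ext (fun t : C => plus (scal t a) b)).
  - intros t. change (t * a + b = a * t + b)%C. ring.
  - apply (is_derive_plus (K:=C_AbsRing) (V:=C_NormedModule));
      [apply (is_derive_scal_l (K:=C_AbsRing) (V:=C_NormedModule)), is_derive_id
      |apply is_derive_const].
Qed.

Lemma holo_Cplus_affine (U : C -> Prop) (a b : C) :
  (forall z, U z -> in_Cplus (affine a b z)) -> holo_Cplus U (affine a b).
Proof. intros HU z Uz. split; [apply ex_derive_affine|exact (HU z Uz)]. Qed.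

Lemma affine_mul_const (a b c z : C) :
  (affine a b z * affine 0 c z)%C = affine (c * a) (c * b) z.
Proof. unfold affine. ring. Qed.

Lemma Im_affine (a b z : C) :
  Im (affine a b z) = Im a * Re z + Re a * Im z + Im b.
Proof. destruct a, b, z. unfold affine. C_to_R. ring. Qed.

Lemma open_Cplus_affine (a b : C) : @open C_UniformSpace (fun z => in_Cplus (affine a b z)).
Proof.
  apply (open_ext (fun z => 0 < Im a * fst z + Re a * snd z + Im b)).
  - intros z. unfold in_Cplus. rewrite Im_affine. reflexivity.
  - apply (open_lt_continuous_2d (fun x y => Im a * x + Re a * y + Im b)).
    intros x y. repeat first
      [ apply continuity_2d_pt_mult | apply continuity_2d_pt_plus | apply continuity_2d_pt_const
      | apply continuity_2d_pt_id1 | apply continuity_2d_pt_id2 ].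
Qed.

Lemma convex_Cplus_affine (a b : C) : convex_C (fun z => in_Cplus (affine a b z)).
Proof.
  intros z w t Hz Hw Ht. unfold in_Cplus in *. rewrite Im_affine in *.
  replace (Im a * Re (z + t * (w - z)) + Re a * Im (z + t * (w - z)) + Im b)
    with ((1 - t) * (Im a * Re z + Re a * Im z + Im b) + t * (Im a * Re w + Re a * Im w + Im b))
    by (destruct z, w; C_to_R; ring).
  destruct (Req_dec t 0) as [->|Ht0]; [lra|].
  assert (0 < t) by lra. nra.
Qed.

(* Stated in the shape of [C1_real_on_bilinear_div_quadratic], hence the [0 * x * y]. *)
Lemma affine_burgers_parts (a b : C) (x y : R) :
  affine_burgers a b (x, y) =
  ((Re b + (Re a * Re b + Im a * Im b) * x + Re a * y + (Re a ^ 2 + Im a ^ 2) * x * y)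
     / (1 + 2 * Re a * x + (Re a ^ 2 + Im a ^ 2) * x * x),
   (Im b + (Re a * Im b - Im a * Re b) * x + Im a * y + 0 * x * y)
     / (1 + 2 * Re a * x + (Re a ^ 2 + Im a ^ 2) * x * x)).
Proof.
  destruct a as [a1 a2], b as [b1 b2]. unfold affine_burgers. C_to_R.
  replace ((1 + (a1 * x - a2 * 0)) ^ 2 + (0 + (a1 * 0 + a2 * x)) ^ 2)
    with (1 + 2 * a1 * x + (a1 ^ 2 + a2 ^ 2) * x * x) by ring.
  f_equal; unfold Rdiv; ring.
Qed.

Lemma C1_on_affine_burgers (Om : R * R -> Prop) (a b : C) :
  (forall p, Om p -> (1 + a * fst p)%C <> 0) -> C1_on Om (affine_burgers a b).
Proof.
  intros Hden.
  assert (HQ : forall x y, Om (x, y) -> 1 + 2 * Re a * x + (Re a ^ 2 + Im a ^ 2) * x * x <> 0).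
  { intros x y Hp HQ0. apply (Hden _ Hp).
    destruct a as [a1 a2]. C_to_R.
    destruct (Rplus_sqr_eq_0 (1 + a1 * x) (a2 * x)) as [E1 E2];
      [unfold Rsqr; rewrite <- HQ0; ring|].
    apply injective_projections; cbn [fst snd]; lra. }
  pose proof (C1_on_pair Om _ _
    (C1_real_on_bilinear_div_quadratic Om
       (Re b) (Re a * Re b + Im a * Im b) (Re a) (Re a ^ 2 + Im a ^ 2) _ _ _ HQ)
    (C1_real_on_bilinear_div_quadratic Om (Im b) (Re a * Im b - Im a * Re b) (Im a) 0 _ _ _ HQ))
    as HC1.
  match type of HC1 with C1_on _ ?B => replace (affine_burgers a b) with B; [exact HC1|] end.
  apply functional_extensionality. intros [x y]. rewrite affine_burgers_parts. reflexivity.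
Qed.

Lemma affine_burgers_spec (a b B : C) (x y : R) :
  (1 + a * x)%C <> 0 ->
  B = affine a b (y - B * x)%C <-> B = affine_burgers a b (x, y).
Proof.
  intros Hden. unfold affine, affine_burgers; cbn [fst snd]. split; intros HB.
  - assert (E : (B * (1 + a * x) = a * y + b)%C).
    { replace (B * (1 + a * x))%C with (B + a * B * x)%C by ring. rewrite HB at 1. ring. }
    rewrite <- E. field. exact Hden.
  - rewrite HB. field. exact Hden.
Qed.

Theorem burgers_unique_on_affine (U : C -> Prop) (a b : C) (Om : R * R -> Prop) :
  @open (prod_UniformSpace R_UniformSpace R_UniformSpace) Om ->
  (forall p, Om p ->
     (1 + a * fst p)%C <> 0 /\ in_Cplus (affine_burgers a b p) /\
     U (snd p - affine_burgers a b p * fst p)%C) ->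
  burgers_unique_on U (affine a b) Om (affine_burgers a b).
Proof.
  intros HOm Hp.
  assert (Hden : forall p, Om p -> (1 + a * fst p)%C <> 0) by (intros p Op; apply Hp, Op).
  split; [exact HOm|split].
  - split; [exact (C1_on_affine_burgers Om a b Hden)|].
    intros [x y] Op. destruct (Hp _ Op) as (Dp & Cp & Up).
    split; [exact Cp|split; [exact Up|]].
    apply affine_burgers_spec; [exact Dp|reflexivity].
  - intros B' [_ HB'] [x y] Op.
    destruct (HB' _ Op) as (_ & _ & E).
    apply affine_burgers_spec; [exact (Hden _ Op)|exact E].
Qed.

Lemma affine_burgers_const (b : C) (p : R * R) : affine_burgers 0 b p = b.
Proof. unfold affine_burgers. field. Qed.

Lemma affine_burgers_mul_const_neq (a b c : C) (x y : R) :
  c <> 0 -> c <> 1 -> a <> 0 -> x <> 0 -> (a * y + b)%C <> 0 ->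
  (1 + a * x)%C <> 0 -> (1 + c * a * x)%C <> 0 ->
  affine_burgers (c * a) (c * b) (x, y) <> (affine_burgers a b (x, y) * c)%C.
Proof.
  unfold affine_burgers; cbn [fst snd]. intros Hc Hc1 Ha Hx Hn Hd Hcd E.
  assert (E' : (c * (a * y + b) * ((1 - c) * a * x) = 0)%C).
  { replace (c * (a * y + b) * ((1 - c) * a * x))%C
      with (((c * a * y + c * b) / (1 + c * a * x) - (a * y + b) / (1 + a * x) * c)
            * (1 + a * x) * (1 + c * a * x))%C by (field; auto).
    rewrite E. ring. }
  revert E'. repeat apply Cmult_neq_0; auto.
  - intros H. apply Hc1. rewrite <- (Cplus_0_r c), <- H. ring.
  - intros H. apply Hx. injection H. auto.
Qed.

Definition f_ex : C -> C := affine 1 Ci.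
Definition g_ex : C -> C := affine 0 (1, 1).
Definition fg_ex : C -> C := affine ((1, 1) * 1) ((1, 1) * Ci).
Definition U_ex (z : C) : Prop := in_Cplus (f_ex z) /\ in_Cplus (fg_ex z).
Definition box (p : R * R) : Prop := -1/10 < fst p < 1/10 /\ -1/10 < snd p < 1/10.

Lemma f_ex_mul_g_ex : (fun z => f_ex z * g_ex z)%C = fg_ex.
Proof. apply functional_extensionality. intros z. apply affine_mul_const. Qed.

Lemma admissible_U_ex : admissible_domain U_ex.
Proof.
  assert (HU : open U_ex) by (apply open_and; apply open_Cplus_affine).
  split; [exact HU|split].
  - apply (connected_C_convex _ HU).
    intros z w t [Hz1 Hz2] [Hw1 Hw2] Ht. split; apply convex_Cplus_affine; assumption.
  - exists 0, 1. split; [lra|]. intros t Ht.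
    unfold U_ex, f_ex, fg_ex, in_Cplus. rewrite !Im_affine. C_to_R. lra.
Qed.

Lemma open_box : @open (prod_UniformSpace R_UniformSpace R_UniformSpace) box.
Proof.
  apply open_and; apply (open_comp _ (fun u => -1/10 < u < 1/10));
    try (apply open_and; [apply open_gt|apply open_lt]); intros [x y] _;
    [apply continuous_fst|apply continuous_snd].
Qed.

Ltac positive_fraction :=
  field_simplify; [try apply Rdiv_lt_0_compat; nra | nra ..].

Ltac box_side_conditions :=
  match goal with p : R * R |- _ => destruct p end;
  intros [[? ?] [? ?]]; cbn [fst snd] in *;
  unfold U_ex, f_ex, fg_ex, in_Cplus; rewrite !Im_affine, affine_burgers_parts;
  C_to_R; split; [intros E; injection E; nra|split; [|split]]; positive_fraction.

Lemma box_f_ex (p : R * R) : box p ->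
  (1 + 1 * fst p)%C <> 0 /\ in_Cplus (affine_burgers 1 Ci p) /\
  U_ex (snd p - affine_burgers 1 Ci p * fst p)%C.
Proof. box_side_conditions. Qed.

Lemma box_g_ex (p : R * R) : box p ->
  (1 + 0 * fst p)%C <> 0 /\ in_Cplus (affine_burgers 0 (1, 1) p) /\
  U_ex (snd p - affine_burgers 0 (1, 1) p * fst p)%C.
Proof. box_side_conditions. Qed.

Lemma box_fg_ex (p : R * R) : box p ->
  (1 + (1, 1) * 1 * fst p)%C <> 0 /\ in_Cplus (affine_burgers ((1, 1) * 1) ((1, 1) * Ci) p) /\
  U_ex (snd p - affine_burgers ((1, 1) * 1) ((1, 1) * Ci) p * fst p)%C.
Proof. box_side_conditions. Qed.

Theorem proposition7p1 :
  exists (U : C -> Prop) (f g : C -> C),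
    admissible_domain U /\ holo_Cplus U f /\ holo_Cplus U g /\
    holo_Cplus U (fun z => Cmult (f z) (g z)) /\
    exists (x y : R) (Om : R * R -> Prop) (Bf Bg Bfg : R * R -> C),
      x <> 0 /\ Om (x, y) /\
      burgers_unique_on U f Om Bf /\
      burgers_unique_on U g Om Bg /\
      burgers_unique_on U (fun z => Cmult (f z) (g z)) Om Bfg /\
      Bfg (x, y) <> Cmult (Bf (x, y)) (Bg (x, y)).
Proof.
  exists U_ex, f_ex, g_ex. rewrite f_ex_mul_g_ex.
  split; [exact admissible_U_ex|].
  split; [apply holo_Cplus_affine; intros z Uz; apply Uz|].
  split; [apply holo_Cplus_affine; intros z _; unfold in_Cplus; rewrite Im_affine; C_to_R; lra|].
  split; [apply holo_Cplus_affine; intros z Uz; apply Uz|].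
  exists (1/20), 0, box, (affine_burgers 1 Ci), (affine_burgers 0 (1, 1)),
    (affine_burgers ((1, 1) * 1) ((1, 1) * Ci)).
  assert (Hbox : box (1/20, 0)) by (unfold box; cbn [fst snd]; lra).
  split; [lra|split; [exact Hbox|]].
  split; [exact (burgers_unique_on_affine _ _ _ _ open_box box_f_ex)|].
  split; [exact (burgers_unique_on_affine _ _ _ _ open_box box_g_ex)|].
  split; [exact (burgers_unique_on_affine _ _ _ _ open_box box_fg_ex)|].
  rewrite affine_burgers_const.
  apply affine_burgers_mul_const_neq;
    [| | |lra| |apply (box_f_ex _ Hbox)|apply (box_fg_ex _ Hbox)];
    intros E; injection E; lra.
Qed.
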